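(* Let $X=\{x_1,\dots,x_m\}$ be any $m$-point metric space, let $n\ge m$, and let $\mathbf{r}=(r_1,\dots,r_m)$ be positive integers with $\sum_i r_i=n$. Then there exist a finite metric space $Y$ with points $y_i^\alpha$ ($1\le i\le m$, $1\le\alpha\le r_i$) and the surjection $f\colon Y\to X$, $f(y_i^\alpha)=x_i$ (so $\#f^{-1}(x_i)=r_i$), such that $F_{X,\mathbf{r}}\big(d_Y(y_i^\alpha,y_j^\beta)\big)\neq0$.
   Context: Write $d_{ij}=d_X(x_i,x_j)$ and let $\delta_{ij}$ be the Kronecker delta. The polynomial $F_{X,\mathbf{r}}$ in variables $a=(a_{ij}^{\alpha\beta})$ ($i,j\in\{1,\dots,m\}$, $1\le\alpha\le r_i$, $1\le\beta\le r_j$) is defined as follows. For each choice $(\beta_1,\dots,\beta_m)$ with $1\le\beta_j\le r_j$, let $M^{(\beta_1,\dots,\beta_m)}(a)$ be the $n\times n$ matrix whose rows and columns are indexed by pairs $(i,\alpha)$, $1\le i\le m$, $1\le\alpha\le r_i$, in lexicographic order, with entry in row $(i,\alpha)$ and column $(j,\beta)$ equal to $\delta_{ij}$ if $\beta=\beta_j$, and equal to $e^{-d_{ij}}\,(a_{ij}^{\alpha\beta}-d_{ij})$ if $\beta\neq\beta_j$. Then $F_{X,\mathbf{r}}(a)=\sum_{\beta_1=1}^{r_1}\cdots\sum_{\beta_m=1}^{r_m}\det M^{(\beta_1,\dots,\beta_m)}(a)$. *)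

From HB Require Import structures.
From mathcomp Require Import all_boot all_order all_algebra.
From mathcomp Require Import reals.
From mathcomp Require Import sequences exp.
Set Implicit Arguments. Unset Strict Implicit. Unset Printing Implicit Defensive.
Import Order.TTheory GRing.Theory Num.Theory.
Local Open Scope ring_scope.

Definition is_metric (R : realType) (T : Type) (d : T -> T -> R) : Prop :=
  (forall x y, d x y = 0 <-> x = y) /\
  (forall x y, d x y = d y x) /\
  (forall x y z, d x z <= d x y + d y z).

(* Index set of the points y_i^alpha : pairs (i, alpha), 1 <= alpha <= r_i
   (0-based here). *)
Definition idx (m : nat) (r : 'I_m -> nat) : finType := {i : 'I_m & 'I_(r i)}.

(* The matrix M^{(beta_1..beta_m)}(a), with rows/columns indexed by
   the enumeration of idx m r (n = #|idx m r| = sum_i r_i). *)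
Definition Mbeta (R : realType) (m : nat) (r : 'I_m -> nat)
  (dX : 'I_m -> 'I_m -> R) (a : idx r -> idx r -> R)
  (b : {dffun forall i : 'I_m, 'I_(r i)}) : 'M[R]_(#|{: idx r}|) :=
  \matrix_(k, l)
    (let p := enum_val k in let q := enum_val l in
     let i := tag p in let j := tag q in
     if tagged q == b j then (i == j)%:R
     else expR (- dX i j) * (a p q - dX i j)).

Definition F_Xr (R : realType) (m : nat) (r : 'I_m -> nat)
  (dX : 'I_m -> 'I_m -> R) (a : idx r -> idx r -> R) : R :=
  \sum_(b : {dffun forall i : 'I_m, 'I_(r i)}) \det (Mbeta dX a b).

From HB Require Import structures.
From mathcomp Require Import all_boot all_order all_algebra.
From mathcomp Require Import fingroup perm.
From mathcomp Require Import reals.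
From mathcomp Require Import sequences exp.
Set Implicit Arguments. Unset Strict Implicit. Unset Printing Implicit Defensive.
Import Order.TTheory GRing.Theory Num.Theory.
Local Open Scope ring_scope.

(* Blow each point x_i up into r_i points at mutual distance t, where
   0 < t <= min_{i <> j} d_ij.  Then a_ij = d_ij across clusters, so every
   M^beta is block diagonal; block i has a column of ones at beta_i and
   t (J - I) elsewhere.  Subtracting t times the column of ones from the other
   columns leaves -t I, hence det M^beta = prod_i (-t)^(r_i - 1) for every
   beta, and F_{X,r} = (prod_i r_i) prod_i (-t)^(r_i - 1) <> 0.  The column
   operation is realised as a factorisation M^beta = C U with det U = 1. *)

Lemma det_bipartite_offdiag (R : comPzRingType) (n : nat) (M : 'M[R]_n)
    (S : pred 'I_n) :
  (forall i j, i != j -> S i || ~~ S j -> M i j = 0) -> \det M = \prod_i M i i.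
Proof.
move=> M0; rewrite /determinant (bigD1 (1%g : 'S_n)) //= [X in _ + X]big1 ?addr0.
  by rewrite odd_perm1 expr0 mul1r; apply: eq_bigr => i _; rewrite perm1.
move=> s s_neq1.
have [i si_neq] : exists i, s i != i.
  apply/existsP; rewrite -negb_forall; apply: contra s_neq1 => /forallP s1.
  by apply/eqP/permP => x; rewrite perm1; apply/eqP.
have [Si_or | /norP[_ /negbNE Ssi]] := boolP (S i || ~~ S (s i)).
  by rewrite (bigD1 i) //= M0 ?mul0r ?mulr0 // eq_sym.
have ssi_neq : s (s i) != s i by rewrite (inj_eq perm_inj).
by rewrite (bigD1 (s i)) //= M0 ?Ssi ?mul0r ?mulr0 // eq_sym.
Qed.

Section Metric.

Variables (R : realType) (T : eqType) (d : T -> T -> R).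
Hypothesis dP : is_metric d.

Lemma metric_xx x : d x x = 0.
Proof. by apply/(proj1 dP). Qed.

Lemma metric_ge0 x y : 0 <= d x y.
Proof.
have [_ [dC dT]] := dP; have := dT x y x.
by rewrite metric_xx (dC y x) -mulr2n pmulrn_lge0.
Qed.

Lemma metric_gt0 x y : x != y -> 0 < d x y.
Proof.
move=> xy; rewrite lt_def metric_ge0 andbT.
by apply: contra xy => /eqP /(proj1 dP) ->.
Qed.

End Metric.

Lemma finite_metric_min_dist (R : realType) (T : finType) (d : T -> T -> R) :
  is_metric d -> exists2 t : R, 0 < t & forall x y, x != y -> t <= d x y.
Proof.
move=> dP; exists (\big[Num.min/1]_(p : T * T | p.1 != p.2) d p.1 p.2).
  elim/big_ind: _ => // [u v u_gt0 v_gt0|p]; first by rewrite lt_min u_gt0.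
  exact: metric_gt0.
by move=> x y xy; rewrite (bigD1 (x, y)) //= ge_min lexx.
Qed.

Section Blowup.

Variables (R : realType) (m : nat) (r : 'I_m -> nat).
Variables (dX : 'I_m -> 'I_m -> R) (t : R).

Definition blowup_dist (p q : idx r) : R :=
  if tag p == tag q then (if p == q then 0 else t) else dX (tag p) (tag q).

Hypotheses (dXP : is_metric dX) (t_gt0 : 0 < t).
Hypothesis t_le_dX : forall i j, i != j -> t <= dX i j.

Lemma blowup_dist_ge0 p q : 0 <= blowup_dist p q.
Proof.
rewrite /blowup_dist; case: ifP => _; last exact: metric_ge0.
by case: ifP => _ //; apply: ltW.
Qed.

Lemma blowup_dist_ge_tag p q : dX (tag p) (tag q) <= blowup_dist p q.
Proof.
rewrite /blowup_dist; case: eqP => [->|//].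
by rewrite metric_xx //; case: ifP => // _; apply: ltW.
Qed.

Lemma blowup_dist_ge_t p q : p != q -> t <= blowup_dist p q.
Proof.
move=> pq; rewrite /blowup_dist (negbTE pq); case: eqP => // /eqP.
exact: t_le_dX.
Qed.

Lemma blowup_metric : is_metric blowup_dist.
Proof.
have [_ [dXC dXT]] := dXP.
split; [|split].
- move=> p q; split=> [|->]; last by rewrite /blowup_dist !eqxx.
  rewrite /blowup_dist; case: eqP => [_|/eqP tpq /(proj1 dXP) tpq'].
    by case: eqP => // _ t0; move: t_gt0; rewrite t0 ltxx.
  by rewrite tpq' eqxx in tpq.
- by move=> p q; rewrite /blowup_dist eq_sym [q == p]eq_sym dXC.
- move=> p q s.
  have [tps|tps] := eqVneq (tag p) (tag s); last first.
    rewrite {1}/blowup_dist (negbTE tps).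
    by apply: le_trans (dXT _ (tag q) _) _; apply: lerD; apply: blowup_dist_ge_tag.
  have [<-|ps] := eqVneq p s.
    by rewrite /blowup_dist !eqxx addr_ge0 // blowup_dist_ge0.
  rewrite {1}/blowup_dist tps eqxx (negbTE ps).
  have [<-|pq] := eqVneq p q.
    by rewrite -[t]add0r lerD ?blowup_dist_ge0 ?blowup_dist_ge_t.
  by rewrite -[t]addr0 lerD ?blowup_dist_ge0 ?blowup_dist_ge_t.
Qed.

End Blowup.

Section Clusters.

Variables (m : nat) (r : 'I_m -> nat) (b : {dffun forall i : 'I_m, 'I_(r i)}).

Local Notation n := #|{: idx r}|.

Definition cluster (k : 'I_n) : 'I_m := tag (enum_val k).

Definition chosen (k : 'I_n) : bool := tagged (enum_val k) == b (cluster k).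

Definition chosen_in (j : 'I_m) : 'I_n :=
  enum_rank (Tagged (fun i => 'I_(r i)) (b j)).

Lemma cluster_chosen_in j : cluster (chosen_in j) = j.
Proof. by rewrite /cluster enum_rankK. Qed.

Lemma chosen_chosen_in j : chosen (chosen_in j).
Proof. by rewrite /chosen /cluster enum_rankK. Qed.

Lemma chosenE k : chosen k -> k = chosen_in (cluster k).
Proof.
rewrite /chosen /cluster => /eqP kb; apply: enum_val_inj; rewrite enum_rankK.
by move: kb; case: (enum_val k) => i a /= ->.
Qed.

Lemma prod_chosen (R : comPzRingType) (c : R) :
  \prod_k (if chosen k then 1 else c) = \prod_i c ^+ (r i).-1.
Proof.
rewrite /chosen /cluster.
rewrite -(big_enum_val (fun p : idx r => if tagged p == b (tag p) then 1 else c)).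
transitivity (\prod_i \prod_(a : 'I_(r i)) if a == b i then 1 else c).
  rewrite (sig_big_dep xpredT (fun i (_ : 'I_(r i)) => true)
    (fun i a => if a == b i then 1 else c)).
  exact: eq_bigl.
apply: eq_bigr => i _; rewrite (bigD1 (b i)) //= eqxx mul1r.
rewrite (eq_bigr (fun=> c)) => [|a /negbTE -> //].
by rewrite prodr_const cardC1 card_ord.
Qed.

Variables (R : comPzRingType) (t : R).

Definition blowup_mx : 'M[R]_n :=
  \matrix_(k, l) ((cluster k == cluster l)%:R *
    (if chosen l then 1 else t * (k != l)%:R)).

(* [reduced_mx] is [blowup_mx] after subtracting t times the chosen column of
   each cluster from the other columns of that cluster; [col_op_mx] undoes
   this column operation. *)
Definition reduced_mx : 'M[R]_n :=
  \matrix_(k, l) ((cluster k == cluster l)%:R *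
    (if chosen l then 1 else - t * (k == l)%:R)).

Definition col_op_mx : 'M[R]_n :=
  \matrix_(k, l) ((k == l)%:R +
    t * (chosen k && ~~ chosen l && (cluster k == cluster l))%:R).

Lemma blowup_mx_factor : blowup_mx = reduced_mx *m col_op_mx.
Proof.
apply/matrixP => k l; rewrite !mxE.
under eq_bigr do rewrite !mxE mulrDr.
rewrite big_split /= (bigD1 l) //= eqxx mulr1.
rewrite [X in _ + X + _]big1 => [|s /negbTE -> //]; last by rewrite mulr0.
rewrite addr0; case: (boolP (chosen l)) => _.
  by rewrite mulr1 big1 ?addr0 // => s _; rewrite andbF !mulr0.
rewrite (bigD1 (chosen_in (cluster l))) //= big1 ?addr0 => [|s sl]; last first.
  case: (boolP (chosen s && _ && _)) => [/andP[/andP[chs _] /eqP csl]|_].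
    by move: sl; rewrite -csl -chosenE ?eqxx.
  by rewrite !mulr0.
rewrite cluster_chosen_in chosen_chosen_in eqxx /= mulr1 -mulrDr mulr1.
by case: (k == l); rewrite /= ?mulr0n ?mulr1n ?mulr0 ?mulr1 ?addNr ?add0r ?mulr0.
Qed.

Lemma det_reduced_mx : \det reduced_mx = \prod_k (if chosen k then 1 else - t).
Proof.
rewrite (@det_bipartite_offdiag _ _ _ chosen).
  by apply: eq_bigr => k _; rewrite mxE eqxx mul1r eqxx mulr1.
move=> k l kl; rewrite mxE.
case: (boolP (chosen l)) => [chl|_]; last by rewrite (negbTE kl) !mulr0.
rewrite orbF => chk; case: eqP => [ckl|_]; last by rewrite mul0r.
by move: kl; rewrite (chosenE chk) (chosenE chl) ckl eqxx.
Qed.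

Lemma det_col_op_mx : \det col_op_mx = 1.
Proof.
rewrite (@det_bipartite_offdiag _ _ _ (fun k => ~~ chosen k)).
  by rewrite big1 // => k _; rewrite mxE eqxx andbN andFb mulr0 addr0.
move=> k l kl; rewrite mxE negbK (negbTE kl) add0r.
by case: (chosen k); case: (chosen l); rewrite //= mulr0.
Qed.

Lemma det_blowup_mx : \det blowup_mx = \prod_i (- t) ^+ (r i).-1.
Proof.
by rewrite blowup_mx_factor det_mulmx det_col_op_mx mulr1 det_reduced_mx prod_chosen.
Qed.

End Clusters.

Lemma Mbeta_blowup (R : realType) (m : nat) (r : 'I_m -> nat)
    (dX : 'I_m -> 'I_m -> R) (t : R) (b : {dffun forall i : 'I_m, 'I_(r i)}) :
  (forall i, dX i i = 0) -> Mbeta dX (blowup_dist dX t) b = blowup_mx b t.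
Proof.
move=> dX0; apply/matrixP => k l.
rewrite !mxE /chosen /blowup_dist -/(cluster k) -/(cluster l).
case: ifP => _; first by rewrite mulr1.
case: eqP => [->|_]; last by rewrite subrr mulr0 mul0r.
rewrite dX0 oppr0 expR0 addr0 !mul1r (inj_eq enum_val_inj).
by case: (k == l); rewrite /= ?mulr0n ?mulr1n ?mulr0 ?mulr1.
Qed.

Theorem proposition4p7 (R : realType) (m : nat) (dX : 'I_m -> 'I_m -> R)
  (r : 'I_m -> nat) :
  is_metric dX ->
  (forall i, (0 < r i)%N) ->
  exists dY : idx r -> idx r -> R,
    is_metric dY /\ F_Xr dX dY != 0.
Proof.
move=> dXP r_gt0.
have [t t_gt0 t_le_dX] := finite_metric_min_dist dXP.
exists (blowup_dist dX t); split; first exact: blowup_metric.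
rewrite /F_Xr (eq_bigr (fun=> \prod_i (- t) ^+ (r i).-1)) => [|b _]; last first.
  by rewrite Mbeta_blowup ?det_blowup_mx // => i; apply: metric_xx.
rewrite sumr_const mulrn_eq0 negb_or -lt0n; apply/andP; split.
  by apply/card_gt0P; exists [ffun i => Ordinal (r_gt0 i)].
by rewrite prodf_seq_neq0; apply/allP => i _; rewrite expf_neq0 // oppr_eq0 gt_eqF.
Qed.
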